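(* Let $n$ be a positive integer and define $$ F_n(x,b,q)=\sum_{k=0}^n \frac{(q^{-n};q)_k\,(b;q)_k\,(x;q)_k}{(q;q)_k\,(bq^{1-n};q^2)_k}\, q^k . $$ Then, as rational functions in the indeterminates $x,b,q$, $F_n(x,b,q)=(-1)^n F_n(-x,b,q)$.
   Context: The $q$-shifted factorial is $(y;q)_0=1$ and $(y;q)_m=(1-y)(1-yq)\cdots(1-yq^{m-1})$ for $m\geqslant1$. *)

From HB Require Import structures.
From mathcomp Require Import all_boot all_order all_algebra.
Set Implicit Arguments. Unset Strict Implicit. Unset Printing Implicit Defensive.
Import Order.TTheory GRing.Theory Num.Theory.
Local Open Scope ring_scope.

Definition qpoch (R : ringType) (y q : R) (m : nat) : R :=
  \prod_(i < m) (1 - y * q ^+ i).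

Definition Fn (K : fieldType) (n : nat) (x b q : K) : K :=
  \sum_(k < n.+1)
    (qpoch (q ^ (- (n%:Z))) q k * qpoch b q k * qpoch x q k)
      / (qpoch q q k * qpoch (b * q ^ (1 - n%:Z)) (q ^+ 2) k) * q ^+ k.

(* Let the denominator parameter c = b q^(1-n) of F_n vary, subject only to
   c q^n = b q. The q-difference F_(n+1)(y) - F_(n+1)(y q) is a multiple of
   y F_n(y q) taken at the parameters (b q, c q^2), which satisfy the same
   constraint. By induction on n, the defect
   H(y) = F_(n+1)(y) - (-1)^(n+1) F_(n+1)(-y) is therefore invariant under
   y |-> y q; as a polynomial of degree at most n+1 taking the same value at
   the n+2 distinct points 1, q, ..., q^(n+1), it is constant, equal to
   H(1) = 1 - (-1)^(n+1) F_(n+1)(-1). Finally F_n(-1) = (-1)^n is a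
   Wilf-Zeilberger summation. *)

From HB Require Import structures.
From mathcomp Require Import all_boot all_order all_algebra.
From mathcomp Require Import ring zify.
Import Order.TTheory GRing.Theory Num.Theory.
Local Open Scope ring_scope.
Set Implicit Arguments. Unset Strict Implicit. Unset Printing Implicit Defensive.

Section QPochhammer.
Variable R : nzRingType.
Implicit Types y q : R.

Lemma qpoch0 y q : qpoch y q 0 = 1.
Proof. by rewrite /qpoch big_ord0. Qed.

Lemma qpochS y q m : qpoch y q m.+1 = qpoch y q m * (1 - y * q ^+ m).
Proof. by rewrite /qpoch big_ord_recr. Qed.

Lemma qpochSl y q m : qpoch y q m.+1 = (1 - y) * qpoch (y * q) q m.
Proof.
rewrite /qpoch big_ord_recl expr0 mulr1; congr (_ * _).
by apply: eq_bigr => i _; rewrite /= exprS mulrA.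
Qed.

Lemma qpoch1S q m : qpoch 1 q m.+1 = 0.
Proof. by rewrite qpochSl subrr mul0r. Qed.

End QPochhammer.

Lemma qpoch_qdiff (R : comNzRingType) (y q : R) k :
  qpoch y q k.+1 - qpoch (y * q) q k.+1 = - y * (1 - q ^+ k.+1) * qpoch (y * q) q k.
Proof. by rewrite qpochSl qpochS exprS; ring. Qed.

Section QPochhammerIdomain.
Variable R : idomainType.
Implicit Types y q : R.

Lemma qpochS_neq0 y q m :
  (qpoch y q m.+1 != 0) = (qpoch y q m != 0) && (1 - y * q ^+ m != 0).
Proof. by rewrite qpochS mulf_eq0 negb_or. Qed.

Lemma qpochSl_neq0 y q m :
  (qpoch y q m.+1 != 0) = (1 - y != 0) && (qpoch (y * q) q m != 0).
Proof. by rewrite qpochSl mulf_eq0 negb_or. Qed.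

Lemma qpoch_neq0_leq y q m k : (k <= m)%N -> qpoch y q m != 0 -> qpoch y q k != 0.
Proof.
move/subnKC <-; elim: (m - k)%N => [|d IHd]; first by rewrite addn0.
by rewrite addnS qpochS_neq0 => /andP[/IHd].
Qed.

Lemma qpoch_qq_expr_neq1 q m i :
  qpoch q q m != 0 -> (0 < i <= m)%N -> q ^+ i != 1.
Proof.
case: i => [|i] hq /andP[// _ him].
have := qpoch_neq0_leq him hq.
by rewrite qpochS_neq0 -exprS => /andP[_]; rewrite subr_eq0 eq_sym.
Qed.

End QPochhammerIdomain.

Lemma qpoch_qinv_eq0 (K : fieldType) (q : K) n : q != 0 -> qpoch (q ^- n) q n.+1 = 0.
Proof. by move=> q0; rewrite qpochS mulVf ?subrr ?mulr0 // expf_neq0. Qed.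

Section QPochhammerPoly.
Variable R : comNzRingType.
Implicit Types a q x : R.

Lemma horner_qpoch a q k x : (qpoch (a *: 'X) q%:P k).[x] = qpoch (a * x) q k.
Proof.
by rewrite /qpoch horner_prod; apply: eq_bigr => i _; rewrite !hornerE.
Qed.

Lemma size_qpoch a q k : (size (qpoch (a *: 'X) q%:P k) <= k.+1)%N.
Proof.
elim: k => [|k IHk]; first by rewrite qpoch0 size_poly1.
rewrite qpochS; apply: leq_trans (size_mul_leq _ _) _.
have lin : (size (1 - a *: 'X * q%:P ^+ k)%R <= 2)%N.
  rewrite -polyC_exp mulrC mul_polyC scalerA.
  apply: leq_trans (size_polyD _ _) _; rewrite size_polyN size_poly1.
  by rewrite geq_max /= (leq_trans (size_scale_leq _ _)) ?size_polyX.
by have := leq_add IHk lin; rewrite addn2; case: (_ + _)%N.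
Qed.

End QPochhammerPoly.

Lemma qinvariant_poly_const (K : fieldType) (q : K) (p : {poly K}) m :
  q != 0 -> (forall i, (0 < i <= m)%N -> q ^+ i != 1) -> (size p <= m.+1)%N ->
  (forall y, p.[y * q] = p.[y]) -> p = (p.[1])%:P.
Proof.
move=> q0 qi1 szp pq; apply/eqP; rewrite -subr_eq0; apply/eqP.
apply: (@roots_geq_poly_eq0 _ _ [seq q ^+ i | i <- iota 0 m.+1]).
- apply/allP => _ /mapP[i _ ->]; rewrite /root !hornerE subr_eq0.
  by elim: i => [|i IHi]; rewrite ?expr0 // exprSr pq.
- rewrite map_inj_in_uniq ?iota_uniq // => i j; rewrite !mem_iota /= !add0n.
  wlog lt_ij : i j / (i <= j)%N => [hwlog|hi hj eq_ij].
    by move=> hi hj eq_ij; case/orP: (leq_total i j) => /hwlog => [|/(_ hj hi)] ->.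
  apply/eqP; rewrite eqn_leq lt_ij leqNgt; apply/negP => ij.
  have /qi1 : (0 < j - i <= m)%N by lia.
  rewrite -(subnKC lt_ij) exprD -{1}[q ^+ i]mulr1 in eq_ij.
  by rewrite -(mulfI (expf_neq0 i q0) eq_ij) eqxx.
- rewrite size_map size_iota; apply: leq_trans (size_polyD _ _) _.
  by rewrite size_polyN geq_max szp (leq_trans (size_polyC_leq1 _)).
Qed.

Section TerminatingSum.
Variables (K : fieldType) (q : K).
Hypothesis q_neq0 : q != 0.

Definition qhyp_coef n b c k :=
  qpoch (q ^- n) q k * qpoch b q k / (qpoch q q k * qpoch c (q ^+ 2) k) * q ^+ k.

Definition qhyp n x b c := \sum_(k < n.+1) qhyp_coef n b c k * qpoch x q k.

Definition qhyp_poly n b c a : {poly K} :=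
  \sum_(k < n.+1) qhyp_coef n b c k *: qpoch (a *: 'X) q%:P k.

Lemma horner_qhyp_poly n b c a x : (qhyp_poly n b c a).[x] = qhyp n (a * x) b c.
Proof.
by rewrite horner_sum; apply: eq_bigr => k _; rewrite hornerZ horner_qpoch.
Qed.

Lemma size_qhyp_poly n b c a : (size (qhyp_poly n b c a) <= n.+1)%N.
Proof.
apply: leq_trans (size_sum _ _ _) _; apply/bigmax_leqP => k _.
exact: leq_trans (size_scale_leq _ _) (leq_trans (size_qpoch _ _ _) (ltn_ord k)).
Qed.

Lemma qhyp0 x b c : qhyp 0 x b c = 1.
Proof. by rewrite /qhyp big_ord1 /qhyp_coef !qpoch0 !mulr1 invr1 mulr1. Qed.

Lemma qhyp1 n b c : qhyp n 1 b c = 1.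
Proof.
rewrite /qhyp big_ord_recl big1 => [|k _]; last by rewrite qpoch1S mulr0.
by rewrite /qhyp_coef !qpoch0 !mulr1 invr1 mulr1 addr0.
Qed.

Lemma qhyp_coefS n b c k :
  qpoch q q k.+1 != 0 -> qpoch c (q ^+ 2) k.+1 != 0 ->
  qhyp_coef n.+1 b c k.+1 * (1 - q ^+ k.+1) =
  (1 - q ^- n.+1) * (1 - b) * q / (1 - c) * qhyp_coef n (b * q) (c * q ^+ 2) k.
Proof.
rewrite qpochS_neq0 qpochSl_neq0 => /andP[hqk hqk1] /andP[hc1 hck].
have qinvS : q ^- n.+1 * q = q ^- n by rewrite exprSr invfM -mulrA mulVf ?mulr1.
rewrite /qhyp_coef (qpochSl (q ^- n.+1)) qinvS (qpochSl b) (qpochS q q k) qpochSl.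
move: hqk hck hqk1; rewrite [q ^+ k.+1]exprS [q ^+ n.+1]exprSr.
(* Naming the products and powers keeps [field] from unfolding them. *)
set A := qpoch (q ^- n) q k; set B := qpoch (b * q) q k.
set Q := qpoch q q k; set C := qpoch (c * q ^+ 2) (q ^+ 2) k.
set w := q ^+ n; set z := q ^+ k => hQ hC hz.
by field; rewrite hQ hC hz hc1 q_neq0 expf_neq0.
Qed.

Lemma qhyp_qdiff n b c y :
  qpoch q q n.+1 != 0 -> qpoch c (q ^+ 2) n.+1 != 0 ->
  qhyp n.+1 y b c - qhyp n.+1 (y * q) b c =
  - ((1 - q ^- n.+1) * (1 - b) * q / (1 - c)) * y * qhyp n (y * q) (b * q) (c * q ^+ 2).
Proof.
move=> hq hc; rewrite /qhyp -sumrB big_ord_recl !qpoch0 subrr add0r mulr_sumr.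
apply: eq_bigr => k _; rewrite -mulrBr qpoch_qdiff.
have coefS := qhyp_coefS n b (qpoch_neq0_leq (ltn_ord k) hq) (qpoch_neq0_leq (ltn_ord k) hc).
transitivity (- y * (qhyp_coef n.+1 b c k.+1 * (1 - q ^+ k.+1)) * qpoch (y * q) q k).
  by ring.
by rewrite coefS; ring.
Qed.

Section AtMinusOne.
Variable c : K.

Definition wz_term n k :=
  (-1) ^+ n * (qhyp_coef n (c * q ^+ n / q) c k * qpoch (-1) q k).

(* A WZ pair in (n, k); the certificate vanishes at k = 0 and, since
   (q^-n; q)_(n+1) = 0, also at k = n + 2. *)
Definition wz_cert n k :=
  if k is j.+1 then (-1) ^+ n.+1 * (qpoch (q ^- n) q j * qpoch (c * q ^+ n) q j
     * qpoch (-1) q k / (qpoch q q j * qpoch c (q ^+ 2) j)) else 0.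

Lemma wz_recurrence n k : (k <= n.+1)%N ->
  qpoch q q n.+1 != 0 -> qpoch c (q ^+ 2) n.+1 != 0 ->
  wz_term n.+1 k - wz_term n k = wz_cert n k.+1 - wz_cert n k.
Proof.
rewrite /wz_term /wz_cert /qhyp_coef; case: k => [|j] hj hq hc.
  by rewrite !qpoch0 qpochS qpoch0 !expr0 !mulr1 exprS; ring.
have /andP[hqj hqj1] : (qpoch q q j != 0) && (1 - q * q ^+ j != 0).
  by rewrite -qpochS_neq0 (qpoch_neq0_leq hj hq).
have /andP[hcj hcj1] : (qpoch c (q ^+ 2) j != 0) && (1 - c * q ^+ 2 ^+ j != 0).
  by rewrite -qpochS_neq0 (qpoch_neq0_leq hj hc).
have qinvS : q ^- n.+1 * q = q ^- n by rewrite exprSr invfM -mulrA mulVf ?mulr1.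
have cqS : c * q ^+ n.+1 / q = c * q ^+ n by rewrite exprSr mulrA mulfK.
rewrite cqS (qpochSl (q ^- n.+1)) qinvS (qpochS (c * q ^+ n)) (qpochSl (c * q ^+ n / q)).
rewrite divfK ?expf_neq0 // (qpochS q q j) (qpochS c _ j) (qpochS (q ^- n) q j).
rewrite (qpochS (-1) q j.+1).
move: hqj hcj hqj1 hcj1.
set A := qpoch (q ^- n) q j; set B := qpoch (c * q ^+ n) q j.
set C := qpoch (-1) q j.+1; set Q := qpoch q q j; set E := qpoch c (q ^+ 2) j.
rewrite -!exprM mulnC exprM !exprSr expr0 !mul1r.
set w := q ^+ n; set z := q ^+ j => hQ hE hz hcz.
by field; rewrite hE hQ hcz hz q_neq0 expf_neq0.
Qed.

Lemma sum_wz_term n : qpoch q q n != 0 -> qpoch c (q ^+ 2) n != 0 ->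
  \sum_(k < n.+1) wz_term n k = 1.
Proof.
elim: n => [|n IHn] hq hc.
  by rewrite big_ord1 /wz_term /qhyp_coef !qpoch0 !expr0 !mul1r !mulr1 invr1.
have wz_last m : wz_term m m.+1 = 0.
  by rewrite /wz_term /qhyp_coef qpoch_qinv_eq0 // !(mul0r, mulr0).
have telescope : \sum_(k < n.+2) (wz_term n.+1 k - wz_term n k) = 0.
  rewrite -(big_mkord xpredT (fun k => wz_term n.+1 k - wz_term n k)).
  rewrite (telescope_sumr_eq (wz_cert n)) // => [|k /andP[_ hk]].
    by rewrite /wz_cert qpoch_qinv_eq0 // !(mul0r, mulr0) subr0.
  exact: wz_recurrence.
have IHn' := IHn (qpoch_neq0_leq (leqnSn n) hq) (qpoch_neq0_leq (leqnSn n) hc).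
move/eqP: telescope; rewrite sumrB [X in _ - X]big_ord_recr /= wz_last addr0 IHn'.
by rewrite subr_eq0 => /eqP.
Qed.

End AtMinusOne.

Lemma qhyp_at_m1 n b c : c * q ^+ n = b * q ->
  qpoch q q n != 0 -> qpoch c (q ^+ 2) n != 0 -> qhyp n (-1) b c = (-1) ^+ n.
Proof.
move=> hbc hq hc; have -> : b = c * q ^+ n / q by rewrite hbc mulfK.
have := sum_wz_term hq hc; rewrite /wz_term -mulr_sumr => sum_eq1.
by rewrite -[LHS](signrMK n) /qhyp sum_eq1 mulr1.
Qed.

Lemma qhyp_parity n b c y : c * q ^+ n = b * q ->
  qpoch q q n != 0 -> qpoch c (q ^+ 2) n != 0 ->
  qhyp n y b c = (-1) ^+ n * qhyp n (- y) b c.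
Proof.
elim: n b c y => [|n IHn] b c y hbc hq hc; first by rewrite !qhyp0 mulr1.
pose H z := qhyp n.+1 z b c - (-1) ^+ n.+1 * qhyp n.+1 (- z) b c.
suff: H y = 0 by move/eqP; rewrite subr_eq0 => /eqP.
have hq' : qpoch q q n != 0 := qpoch_neq0_leq (leqnSn n) hq.
have hc' : qpoch (c * q ^+ 2) (q ^+ 2) n != 0.
  by move: hc; rewrite qpochSl_neq0 => /andP[].
have hbc' : c * q ^+ 2 * q ^+ n = b * q * q.
  by rewrite -hbc [q ^+ n.+1]exprSr; ring.
have Hq z : H (z * q) = H z.
  apply/eqP; rewrite eq_sym -subr_eq0 /H.
  have -> : forall A B C D s : K, A - s * B - (C - s * D) = (A - C) - s * (B - D).
    by move=> *; ring.
  rewrite qhyp_qdiff // -(mulNr z q) qhyp_qdiff // (IHn _ _ (z * q) hbc' hq' hc').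
  by rewrite (mulNr z q) [(-1) ^+ n.+1]exprS; apply/eqP; ring.
pose p := qhyp_poly n.+1 b c 1 - (-1) ^+ n.+1 *: qhyp_poly n.+1 b c (-1).
have pH z : p.[z] = H z.
  by rewrite hornerD hornerN hornerZ !horner_qhyp_poly mul1r mulN1r.
have size_p : (size p <= n.+2)%N.
  apply: leq_trans (size_polyD _ _) _; rewrite size_polyN geq_max size_qhyp_poly /=.
  exact: leq_trans (size_scale_leq _ _) (size_qhyp_poly _ _ _ _).
have H1 : H 1 = 0.
  by rewrite /H qhyp1 (qhyp_at_m1 hbc hq hc) -expr2 sqrr_sign subrr.
have p_qinv z : p.[z * q] = p.[z] by rewrite !pH Hq.
have := qinvariant_poly_const q_neq0 (fun i => qpoch_qq_expr_neq1 hq) size_p p_qinv.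
by move/(congr1 (horner^~ y)); rewrite hornerC !pH H1.
Qed.

End TerminatingSum.

Lemma Fn_qhyp (K : fieldType) n (x b q : K) :
  Fn n x b q = qhyp q n x b (b * q ^ (1 - n%:Z)).
Proof.
by rewrite /Fn /qhyp; apply: eq_bigr => k _; rewrite /qhyp_coef -exprnN; ring.
Qed.

Theorem lemma3p1 (K : fieldType) (n : nat) (x b q : K) :
  (0 < n)%N ->
  q != 0 ->
  (forall k : nat, (k <= n)%N -> qpoch q q k != 0) ->
  (forall k : nat, (k <= n)%N -> qpoch (b * q ^ (1 - n%:Z)) (q ^+ 2) k != 0) ->
  Fn n x b q = (-1) ^+ n * Fn n (- x) b q.
Proof.
move=> _ q0 hq hc; rewrite !Fn_qhyp.
have hbc : b * q ^ (1 - n%:Z) * q ^+ n = b * q.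
  by rewrite -mulrA -[q ^+ n]/(q ^ n%:Z) -expfzDr // subrK.
exact: (qhyp_parity q0 x hbc (hq n (leqnn n)) (hc n (leqnn n))).
Qed.
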